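(* Let $\hbar,\alpha,g_0,\kappa_0,b_0>0$ and $\lambda>2b_0$, and let $\Delta\tau=\Delta\tau_O=\frac{4\lambda\kappa_0}{\alpha g_0(\lambda-2b_0)}$, $K=\frac{2\lambda\kappa_0}{\alpha g_0\Delta\tau}$, $C=\frac{\alpha g_0\Delta\tau}{2\lambda\kappa_0}$. Define the pointer states by their position kernels $$\rho_\pm(b,b')=\frac{C}{b_0\pi}\,\frac{\sin[K(b-b')]}{b-b'}\,\frac{\sin(b_0b)}{b}\,\frac{\sin(b_0b')}{b'}\,e^{\pm\frac{i\lambda}{2}(b-b')},$$ and their momentum densities $\langle s|\rho_\pm|s\rangle=\frac{1}{2\pi\hbar}\int\!\!\int e^{-is(b-b')/\hbar}\rho_\pm(b,b')\,db\,db'$. Then $\langle s|\rho_-|s\rangle=\langle -s|\rho_+|-s\rangle$, and $\langle s|\rho_+|s\rangle$ vanishes outside $[0,\lambda\hbar]$ and is given on $[0,\lambda\hbar]$ as follows: (i) if $\lambda>4b_0$: $\frac{s}{2b_0\hbar^2(\lambda-2b_0)}$ on $[0,2b_0\hbar]$, $\frac{1}{(\lambda-2b_0)\hbar}$ on $[2b_0\hbar,(\lambda-2b_0)\hbar]$, $\frac{\lambda-s/\hbar}{2b_0\hbar(\lambda-2b_0)}$ on $[(\lambda-2b_0)\hbar,\lambda\hbar]$; (ii) if $2b_0<\lambda<4b_0$: $\frac{s}{2b_0\hbar^2(\lambda-2b_0)}$ on $[0,(\lambda-2b_0)\hbar]$, $\frac{1}{2b_0\hbar}$ on $[(\lambda-2b_0)\hbar,2b_0\hbar]$,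 $\frac{\lambda-s/\hbar}{2b_0\hbar(\lambda-2b_0)}$ on $[2b_0\hbar,\lambda\hbar]$; (iii) if $\lambda=4b_0$: $\frac{4s}{\lambda^2\hbar^2}$ on $[0,\lambda\hbar/2]$ and $\frac{4(\lambda-s/\hbar)}{\lambda^2\hbar}$ on $[\lambda\hbar/2,\lambda\hbar]$. In particular the momentum densities of $\rho_+$ and $\rho_-$ have supports $[0,\lambda\hbar]$ and $[-\lambda\hbar,0]$, which do not overlap except at $s=0$.
   Context: $\rho_\pm$ are the pointer states in the measurement of $S_z$ of a spin-1/2 particle with probe initial state $\frac{1}{\sqrt{\kappa_0\pi}}\frac{\sin(\kappa_0 q)}{q}$ and pointer initial state $\frac{1}{\sqrt{b_0\pi}}\frac{\sin(b_0 b)}{b}$; $s$ is the pointer momentum variable, with $\langle s|b\rangle=e^{isb/\hbar}/\sqrt{2\pi\hbar}$. *)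

From Stdlib Require Import Reals Lra.
Open Scope R_scope.

Definition sinq (a x : R) : R :=
  if Req_EM_T x 0 then a else sin (a * x) / x.

(* Minimal complex arithmetic on pairs (re, im). *)
Definition Cx : Type := (R * R)%type.
Definition Cmul (z w : Cx) : Cx :=
  (fst z * fst w - snd z * snd w, fst z * snd w + snd z * fst w).
Definition Cscal (r : R) (z : Cx) : Cx := (r * fst z, r * snd z).
Definition Cexpi (t : R) : Cx := (cos t, sin t).

Definition RInt_val (f : R -> R) (a b v : R) : Prop :=
  exists pr : Riemann_integrable f a b, RiemannInt pr = v.

Definition square_int (F : R -> R -> R) (r v : R) : Prop :=
  exists g : R -> R,
    (forall b, RInt_val (fun b' => F b b') (- r) r (g b)) /\
    RInt_val g (- r) r v.

(* Improper double integral over R^2 (limit of integrals over growing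
   squares; the integrands considered are absolutely integrable). *)
Definition double_int_R2 (F : R -> R -> R) (l : R) : Prop :=
  exists V : R -> R,
    (forall r, 0 < r -> square_int F r (V r)) /\
    (forall eps, 0 < eps -> exists M, forall r, M <= r -> Rabs (V r - l) < eps).

Definition dtau (alpha g0 kappa0 b0 lambda : R) : R :=
  4 * lambda * kappa0 / (alpha * g0 * (lambda - 2 * b0)).
Definition Kc (alpha g0 kappa0 b0 lambda : R) : R :=
  2 * lambda * kappa0 / (alpha * g0 * dtau alpha g0 kappa0 b0 lambda).
Definition Cc (alpha g0 kappa0 b0 lambda : R) : R :=
  alpha * g0 * dtau alpha g0 kappa0 b0 lambda / (2 * lambda * kappa0).

Definition rho (sgn alpha g0 kappa0 b0 lambda b b' : R) : Cx :=
  Cscal (Cc alpha g0 kappa0 b0 lambda / (b0 * PI)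
         * sinq (Kc alpha g0 kappa0 b0 lambda) (b - b')
         * sinq b0 b * sinq b0 b')
        (Cexpi (sgn * lambda / 2 * (b - b'))).

Definition mom_integrand (hbar sgn alpha g0 kappa0 b0 lambda s b b' : R) : Cx :=
  Cscal (/ (2 * PI * hbar))
        (Cmul (Cexpi (- s * (b - b') / hbar))
              (rho sgn alpha g0 kappa0 b0 lambda b b')).

(* <s|rho_sgn|s> = d  (complex value d + 0 i). *)
Definition mom_density (hbar sgn alpha g0 kappa0 b0 lambda s d : R) : Prop :=
  double_int_R2 (fun b b' => fst (mom_integrand hbar sgn alpha g0 kappa0 b0 lambda s b b')) d /\
  double_int_R2 (fun b b' => snd (mom_integrand hbar sgn alpha g0 kappa0 b0 lambda s b b')) 0.

(* Write sinq a x = sin (a x) / x and w = +-lambda/2 - s/hbar.  The momentum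
   integrand is a constant times sinq K (b - b') e^{i w (b - b')} sinq b0 b sinq b0 b'.
   Its imaginary part is odd under (b, b') |-> (-b, -b') and integrates to 0 over
   every square [-r, r]^2, while in its real part
   sinq K x cos (w x) = (sinq (K + w) x + sinq (K - w) x) / 2.  Everything thus
   reduces to J_r(a) = integral over [-r, r]^2 of sinq b0 b sinq b0 b' sinq a (b - b').
   Differentiating in a, J_r'(a) = (integral of sinq b0 b cos (a b) db)^2
   = (Si ((b0 + a) r) + Si ((b0 - a) r))^2, and by Dirichlet's integral
   Si x -> PI/2 this tends boundedly to PI^2 for |a| < b0 and to 0 for |a| > b0.
   Hence J_r(a) -> PI^2 clamp b0 a, and since K = (lambda - 2 b0)/2 the density is
   a sum of two clamps: the stated trapezoid. *)

From Stdlib Require Import Reals Lra.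
From Coquelicot Require Import Coquelicot.
Open Scope R_scope.

(** * Integrals of real functions *)

(* Equalities between Coquelicot integrals live in the carrier of
   [R_CompleteNormedModule], on which [ring] does not fire. *)
Ltac ring_R := match goal with |- ?a = ?b => change (@eq R a b); ring end.

Lemma RInt_ext_R (f g : R -> R) a b :
  (forall x, Rmin a b < x < Rmax a b -> f x = g x) -> RInt f a b = RInt g a b.
Proof. apply RInt_ext. Qed.

Lemma RInt_Rplus (f g : R -> R) a b : ex_RInt f a b -> ex_RInt g a b ->
  RInt (fun x => f x + g x) a b = RInt f a b + RInt g a b.
Proof. intros. apply (RInt_plus f g); auto. Qed.

Lemma RInt_Rminus (f g : R -> R) a b : ex_RInt f a b -> ex_RInt g a b ->
  RInt (fun x => f x - g x) a b = RInt f a b - RInt g a b.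
Proof. intros. apply (RInt_minus f g); auto. Qed.

Lemma RInt_Rmult_l (f : R -> R) c a b : ex_RInt f a b ->
  RInt (fun x => c * f x) a b = c * RInt f a b.
Proof. intros. apply (RInt_scal f a b c); auto. Qed.

Lemma RInt_Ropp (f : R -> R) a b : ex_RInt f a b ->
  RInt (fun x => - f x) a b = - RInt f a b.
Proof. intros. apply (RInt_opp f); auto. Qed.

Lemma ex_RInt_Rmult_l (f : R -> R) c a b : ex_RInt f a b -> ex_RInt (fun x => c * f x) a b.
Proof. intros. apply (@ex_RInt_scal R_NormedModule f a b c); auto. Qed.

Lemma RInt_Rconst c a b : RInt (fun _ => c) a b = c * (b - a).
Proof. rewrite RInt_const. unfold scal; simpl; unfold mult; simpl. ring. Qed.

Lemma ex_RInt_continuity_pt (f : R -> R) a b :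
  (forall z, Rmin a b <= z <= Rmax a b -> continuity_pt f z) -> ex_RInt f a b.
Proof.
  intros H. apply (@ex_RInt_continuous R_CompleteNormedModule).
  intros; apply continuity_pt_filterlim; auto.
Qed.

Lemma RInt_between (f : R -> R) a b lo hi : a <= b -> ex_RInt f a b ->
  (forall t, a < t < b -> lo <= f t <= hi) ->
  lo * (b - a) <= RInt f a b <= hi * (b - a).
Proof.
  intros Hab Hex H. rewrite <- !RInt_Rconst. split;
    apply RInt_le; auto; try apply ex_RInt_const; intros; apply H; auto.
Qed.

Lemma RInt_comp_opp_sym (h : R -> R) r : ex_RInt h (- r) r ->
  RInt (fun y => h (- y)) (- r) r = RInt h (- r) r.
Proof.
  intros Hex.
  assert (H : is_RInt h (- r) (- - r) (RInt h (- r) r)).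
  { rewrite Ropp_involutive. apply (@RInt_correct R_CompleteNormedModule). auto. }
  apply is_RInt_comp_opp, is_RInt_swap, is_RInt_opp in H.
  apply (@is_RInt_unique R_CompleteNormedModule).
  unfold opp in H; simpl in H. rewrite Ropp_involutive in H.
  eapply is_RInt_ext; [|exact H]. intros x _. simpl. ring.
Qed.

Lemma RInt_odd (f : R -> R) r : (forall x, f (- x) = - f x) -> ex_RInt f (- r) r ->
  RInt f (- r) r = 0.
Proof.
  intros Hodd Hex. pose proof (RInt_comp_opp_sym f r Hex) as H.
  rewrite (RInt_ext _ (fun x => - f x)), RInt_Ropp in H by auto. lra.
Qed.

(* By uniform continuity of f on the compact [a, b] x {c}. *)
Lemma continuous_RInt_param (f : R -> R -> R) (a b c : R) : a <= b ->
  (forall t, a <= t <= b -> continuity_2d_pt f t c) ->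
  (forall p, ex_RInt (fun t => f t p) a b) ->
  continuous (fun p => RInt (fun t => f t p) a b) c.
Proof.
  intros Hab Hc Hex.
  apply filterlim_locally. intros eps.
  assert (He' : 0 < eps / (2 * (b - a + 1))).
  { apply Rdiv_lt_0_compat. apply cond_pos. lra. }
  destruct (uniform_continuity_2d_1d f a b c Hc (mkposreal _ He')) as [d Hd].
  exists d. intros p Hp. change (Rabs (p - c) < d) in Hp.
  change (Rabs (RInt (fun t => f t p) a b - RInt (fun t => f t c) a b) < eps).
  simpl in Hd. rewrite <- RInt_Rminus by auto.
  apply Rle_lt_trans with ((b - a) * (eps / (2 * (b - a + 1)))).
  - apply abs_RInt_le_const; auto.
    + apply (@ex_RInt_minus R_NormedModule (fun t => f t p) (fun t => f t c)); auto.
    + intros t Ht. left. pose proof (cond_pos d). apply Rabs_def2 in Hp.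
      apply (Hd t c t p Ht); try (split; lra);
        rewrite ?Rminus_eq_0, ?Rabs_R0; lra.
  - pose proof (cond_pos eps).
    apply Rle_lt_trans with ((b - a + 1) * (eps / (2 * (b - a + 1)))).
    + apply Rmult_le_compat_r; lra.
    + field_simplify; lra.
Qed.

Lemma continuity_pt_of_2d_snd F x y :
  continuity_2d_pt F x y -> continuity_pt (fun t => F x t) y.
Proof.
  intros H. apply continuity_pt_filterlim, filterlim_locally. intros eps.
  destruct (H eps) as [d Hd]. exists d. intros t Ht. apply (Hd x t).
  rewrite Rminus_eq_0, Rabs_R0; apply cond_pos. exact Ht.
Qed.

(** * Cardinal sines *)

Lemma sinq_RInt (c x : R) : sinq c x = RInt (fun s => c * cos (c * x * s)) 0 1.
Proof.
  unfold sinq. destruct (Req_EM_T x 0) as [->|Hx].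
  - rewrite (RInt_ext _ (fun _ => c)), RInt_Rconst; [ring|].
    intros s _. rewrite Rmult_0_r, Rmult_0_l, cos_0, Rmult_1_r. reflexivity.
  - symmetry. apply is_RInt_unique.
    assert (H : is_RInt (fun s => c * cos (c * x * s)) 0 1
        (minus ((fun s => sin (c * x * s) / x) 1) ((fun s => sin (c * x * s) / x) 0))).
    { apply (is_RInt_derive (fun s => sin (c * x * s) / x)).
      - intros s _. auto_derive; auto. field. auto.
      - intros s _. apply continuity_pt_filterlim. reg. }
    simpl in H. unfold minus, plus, opp in H; simpl in H.
    rewrite Rmult_0_r, sin_0, Rmult_1_r in H.
    replace (sin (c * x) / x) with (sin (c * x) / x + - (0 / x)) by (field; auto). exact H.
Qed.

Lemma ex_RInt_cos_param (c p : R) : ex_RInt (fun t => c * cos (c * p * t)) 0 1.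
Proof. apply ex_RInt_continuity_pt. intros z _. reg. Qed.

Lemma sinq_continuous (c x : R) : continuous (sinq c) x.
Proof.
  apply (continuous_ext (fun p => RInt (fun t => c * cos (c * p * t)) 0 1)).
  - intros p. symmetry. apply sinq_RInt.
  - apply continuous_RInt_param; [lra| |apply ex_RInt_cos_param].
    intros t _. apply continuity_2d_pt_mult; [apply continuity_2d_pt_const|].
    apply (continuity_1d_2d_pt_comp cos); [apply continuity_cos|].
    apply continuity_2d_pt_mult; [|apply continuity_2d_pt_id1].
    apply continuity_2d_pt_mult; [apply continuity_2d_pt_const|apply continuity_2d_pt_id2].
Qed.

Lemma sinq_continuity_pt (c x : R) : continuity_pt (sinq c) x.
Proof. apply continuity_pt_filterlim, sinq_continuous. Qed.

Lemma ex_RInt_sinq c a b : ex_RInt (sinq c) a b.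
Proof. apply ex_RInt_continuity_pt. intros; apply sinq_continuity_pt. Qed.

Lemma Rabs_sinq_le (c x : R) : Rabs (sinq c x) <= Rabs c.
Proof.
  rewrite sinq_RInt. replace (Rabs c) with ((1 - 0) * Rabs c) by ring.
  apply abs_RInt_le_const; [lra|apply ex_RInt_cos_param|].
  intros t _. rewrite Rabs_mult. rewrite <- (Rmult_1_r (Rabs c)) at 2.
  apply Rmult_le_compat_l; [apply Rabs_pos|]. apply Rabs_le, COS_bound.
Qed.

Lemma sinq_opp (c x : R) : sinq c (- x) = sinq c x.
Proof.
  unfold sinq. destruct (Req_EM_T (-x) 0); destruct (Req_EM_T x 0); try lra.
  replace (c * - x) with (- (c * x)) by ring. rewrite sin_neg. field. auto.
Qed.

Lemma sinq_opp_param (c x : R) : sinq (- c) x = - sinq c x.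
Proof.
  unfold sinq. destruct (Req_EM_T x 0); auto.
  replace (- c * x) with (- (c * x)) by ring. rewrite sin_neg. field. auto.
Qed.

Lemma sinq_0_param (x : R) : sinq 0 x = 0.
Proof. unfold sinq. destruct (Req_EM_T x 0); auto. rewrite Rmult_0_l, sin_0. field. auto. Qed.

Lemma sinq_scale (c x : R) : sinq c x = c * sinq 1 (c * x).
Proof.
  unfold sinq. destruct (Req_EM_T x 0) as [->|Hx].
  - rewrite Rmult_0_r. destruct (Req_EM_T 0 0); [ring|lra].
  - destruct (Req_EM_T (c * x) 0) as [H|H].
    + destruct (Rmult_integral _ _ H) as [->|]; [|lra]. rewrite Rmult_0_l, sin_0. field. auto.
    + rewrite Rmult_1_l. field. split; auto. intros ->. apply H; ring.
Qed.

Lemma is_derive_sinq_param (c x : R) : is_derive (fun a => sinq a x) c (cos (c * x)).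
Proof.
  unfold sinq. destruct (Req_EM_T x 0) as [->|Hx].
  - rewrite Rmult_0_r, cos_0. apply (@is_derive_id R_AbsRing).
  - auto_derive; auto. field. auto.
Qed.

Lemma sinq_mul_cos (c w x : R) :
  sinq c x * cos (w * x) = / 2 * sinq (c + w) x + / 2 * sinq (c - w) x.
Proof.
  unfold sinq. destruct (Req_EM_T x 0) as [->|Hx].
  - rewrite Rmult_0_r, cos_0. field.
  - replace ((c + w) * x) with (c * x + w * x) by ring.
    replace ((c - w) * x) with (c * x - w * x) by ring.
    rewrite sin_plus, sin_minus. field. auto.
Qed.

Lemma RInt_sinq_scale c a b : RInt (sinq c) a b = RInt (sinq 1) (c * a) (c * b).
Proof.
  rewrite <- (Rplus_0_r (c * a)), <- (Rplus_0_r (c * b)).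
  rewrite <- (RInt_comp_lin (sinq 1) c 0 a b) by apply ex_RInt_sinq.
  apply RInt_ext. intros x _. rewrite Rplus_0_r, sinq_scale. reflexivity.
Qed.

(** * The sine integral *)

Definition Si (x : R) : R := RInt (sinq 1) 0 x.

Lemma Si_sub x y : Si y - Si x = RInt (sinq 1) x y.
Proof.
  unfold Si. rewrite <- (RInt_Chasles (sinq 1) 0 x y) by apply ex_RInt_sinq.
  unfold plus; simpl. ring.
Qed.

Lemma Si_continuity_pt x : continuity_pt Si x.
Proof.
  apply continuity_pt_filterlim, (@ex_derive_continuous R_AbsRing R_NormedModule).
  exists (sinq 1 x). apply (is_derive_RInt (sinq 1) Si 0 x).
  - apply filter_forall. intros b. apply (@RInt_correct R_CompleteNormedModule), ex_RInt_sinq.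
  - apply sinq_continuous.
Qed.

Lemma Si_opp x : Si (- x) = - Si x.
Proof.
  unfold Si.
  assert (H : is_RInt (sinq 1) (- 0) (- x) (RInt (sinq 1) 0 (- x))).
  { rewrite Ropp_0. apply (@RInt_correct R_CompleteNormedModule), ex_RInt_sinq. }
  apply is_RInt_comp_opp, (@is_RInt_unique R_CompleteNormedModule) in H.
  rewrite <- H, <- RInt_Ropp by apply ex_RInt_sinq.
  apply RInt_ext. intros y _. unfold opp; simpl. rewrite sinq_opp. reflexivity.
Qed.

Lemma RInt_sinq_sym c r : RInt (sinq c) (- r) r = 2 * Si (c * r).
Proof.
  rewrite RInt_sinq_scale.
  rewrite <- (RInt_Chasles (sinq 1) (c * - r) 0 (c * r)) by apply ex_RInt_sinq.
  unfold plus; simpl.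
  rewrite <- (opp_RInt_swap (sinq 1)) by apply ex_RInt_sinq.
  fold (Si (c * - r)) (Si (c * r)).
  replace (c * - r) with (- (c * r)) by ring. rewrite Si_opp. unfold opp; simpl. ring.
Qed.

Lemma RInt_inv_sqr x y : 0 < x <= y -> RInt (fun u => / (u * u)) x y = / x - / y.
Proof.
  intros Hxy. apply is_RInt_unique.
  assert (H : is_RInt (fun u => / (u * u)) x y (minus ((fun u => - / u) y) ((fun u => - / u) x))).
  { apply (is_RInt_derive (fun u => - / u)); intros u Hu;
      rewrite Rmin_left, Rmax_right in Hu by lra.
    - auto_derive; [lra|]. field. lra.
    - apply continuity_pt_filterlim. reg. nra. }
  unfold minus, plus, opp in H; simpl in H. replace (/ x - / y) with (- / y + - - / x) by ring.
  exact H.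
Qed.

Lemma Rabs_RInt_cos_div_sqr_le x y : 0 < x <= y ->
  Rabs (RInt (fun u => cos u / (u * u)) x y) <= / x - / y.
Proof.
  intros Hxy. rewrite <- RInt_inv_sqr by lra.
  assert (HmM : forall u, Rmin x y <= u <= Rmax x y -> x <= u <= y)
    by (intros u; rewrite Rmin_left, Rmax_right by lra; auto).
  eapply Rle_trans; [apply abs_RInt_le; [lra|]|apply RInt_le; [lra| | |]].
  - apply ex_RInt_continuity_pt. intros u Hu. apply HmM in Hu. reg. nra.
  - apply ex_RInt_continuity_pt. intros u Hu. apply HmM in Hu.
    apply (continuity_pt_comp (fun u => cos u / (u * u)) Rabs); [reg; nra|apply Rcontinuity_abs].
  - apply ex_RInt_continuity_pt. intros u Hu. apply HmM in Hu. reg. nra.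
  - intros u Hu. rewrite Rabs_div, (Rabs_right (u * u)) by nra. unfold Rdiv.
    rewrite <- (Rmult_1_l (/ (u * u))) at 2. apply Rmult_le_compat_r.
    + left; apply Rinv_0_lt_compat; nra.
    + apply Rabs_le, COS_bound.
Qed.

(* Integrating by parts, sin u / u = (- cos u / u)' - cos u / u^2. *)
Lemma Rabs_Si_sub_le x y : 0 < x <= y -> Rabs (Si y - Si x) <= 2 / x.
Proof.
  intros Hxy. rewrite Si_sub.
  set (Psi := fun u => - cos u / u).
  set (dPsi := fun u => sin u / u + cos u / (u * u)).
  assert (HmM : forall u, Rmin x y <= u <= Rmax x y -> x <= u <= y)
    by (intros u; rewrite Rmin_left, Rmax_right by lra; auto).
  assert (Hc : forall u, x <= u <= y -> continuity_pt dPsi u)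
    by (intros u Hu; unfold dPsi; reg; nra).
  rewrite (RInt_ext (sinq 1) (fun u => dPsi u - cos u / (u * u))).
  2:{ intros u Hu. rewrite Rmin_left, Rmax_right in Hu by lra.
      unfold sinq, dPsi. destruct (Req_EM_T u 0); [lra|]. rewrite Rmult_1_l. lra. }
  rewrite RInt_Rminus.
  2:{ apply ex_RInt_continuity_pt. intros; apply Hc, HmM; auto. }
  2:{ apply ex_RInt_continuity_pt. intros u Hu. apply HmM in Hu. reg. nra. }
  assert (HP : RInt dPsi x y = Psi y - Psi x).
  { apply is_RInt_unique, (is_RInt_derive Psi dPsi); intros u Hu; apply HmM in Hu.
    - unfold Psi, dPsi. auto_derive; [lra|]. field. lra.
    - apply continuity_pt_filterlim, Hc; auto. }
  rewrite HP.
  assert (HPs : Rabs (Psi y - Psi x) <= / y + / x).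
  { assert (Hcb : forall t, 0 < t -> - / t <= cos t / t <= / t).
    { intros t Ht. pose proof (COS_bound t). unfold Rdiv.
      pose proof (Rinv_0_lt_compat t Ht). split; nra. }
    unfold Psi. apply Rabs_le.
    destruct (Hcb x) as [A1 A2]; [lra|]. destruct (Hcb y) as [B1 B2]; [lra|].
    replace (- cos y / y - - cos x / x) with (cos x / x - cos y / y) by (field; lra).
    split; lra. }
  pose proof (Rabs_RInt_cos_div_sqr_le x y Hxy).
  eapply Rle_trans; [apply Rabs_triang|]. rewrite Rabs_Ropp.
  replace (2 / x) with ((/ y + / x) + (/ x - / y)) by (field; lra). lra.
Qed.

Lemma sin_cubic_bounds y : 0 <= y <= PI -> y - y ^ 3 / 6 <= sin y <= y.
Proof.
  intros Hy. split.
  - destruct (sin_bound y 0) as [H _]; try lra.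
    replace (y - y ^ 3 / 6) with (sin_approx y (2 * 0 + 1)); [exact H|].
    unfold sin_approx, sin_term. simpl. field.
  - destruct (Req_dec y 0) as [->|Hy0]; [rewrite sin_0; lra|].
    left; apply sin_lt_x; lra.
Qed.

Lemma sin_half_ge x : 0 < x <= PI -> x / 6 <= sin (x / 2).
Proof.
  intros Hx. pose proof PI_4 as HPI.
  destruct (sin_cubic_bounds (x / 2)) as [Hs _]; [lra|].
  assert (x * (16 - x * x) >= 0) by nra.
  replace (x / 2 - (x / 2) ^ 3 / 6) with (x / 6 + x * (16 - x * x) / 48) in Hs by field.
  lra.
Qed.

Fixpoint dirichlet_kernel (n : nat) (x : R) : R :=
  match n with
  | O => 1
  | S m => dirichlet_kernel m x + 2 * cos (INR (S m) * x)
  end.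

Fixpoint dirichlet_kernel_primitive (n : nat) (x : R) : R :=
  match n with
  | O => x
  | S m => dirichlet_kernel_primitive m x + 2 * sin (INR (S m) * x) / INR (S m)
  end.

Lemma is_derive_dirichlet_kernel_primitive n x :
  is_derive (dirichlet_kernel_primitive n) x (dirichlet_kernel n x).
Proof.
  induction n as [|n IHn]; cbn [dirichlet_kernel_primitive dirichlet_kernel].
  - apply (@is_derive_id R_AbsRing).
  - apply (is_derive_plus (dirichlet_kernel_primitive n)); auto.
    assert (0 < INR (S n)) by apply lt_0_INR, Nat.lt_0_succ.
    revert H. generalize (INR (S n)). intros k Hk.
    auto_derive; auto. field. lra.
Qed.

Lemma dirichlet_kernel_continuity_pt n x : continuity_pt (dirichlet_kernel n) x.
Proof. induction n; cbn [dirichlet_kernel]; reg; auto. Qed.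

Lemma RInt_dirichlet_kernel n : RInt (dirichlet_kernel n) 0 PI = PI.
Proof.
  assert (Hend : forall y, (y = 0 \/ y = PI) -> dirichlet_kernel_primitive n y = y).
  { intros y Hy. induction n as [|n IHn]; cbn [dirichlet_kernel_primitive]; auto.
    rewrite IHn. replace (sin (INR (S n) * y)) with 0; [unfold Rdiv; ring|].
    destruct Hy as [->| ->]; [rewrite Rmult_0_r, sin_0; auto|].
    symmetry. apply sin_eq_0_1. exists (Z.of_nat (S n)). rewrite <- INR_IZR_INZ. auto. }
  apply is_RInt_unique.
  assert (H : is_RInt (dirichlet_kernel n) 0 PI
    (minus (dirichlet_kernel_primitive n PI) (dirichlet_kernel_primitive n 0))).
  { apply (is_RInt_derive (dirichlet_kernel_primitive n)); intros.
    - apply is_derive_dirichlet_kernel_primitive.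
    - apply continuity_pt_filterlim, dirichlet_kernel_continuity_pt. }
  rewrite !Hend in H by auto. unfold minus, plus, opp in H; simpl in H.
  replace (PI + - 0) with PI in H by ring. exact H.
Qed.

Lemma dirichlet_kernel_0 n : dirichlet_kernel n 0 = 1 + 2 * INR n.
Proof.
  induction n as [|n IHn]; cbn [dirichlet_kernel]; [simpl; ring|].
  rewrite IHn, Rmult_0_r, cos_0, S_INR. ring.
Qed.

Lemma sin_mul_dirichlet_kernel n x :
  sin (x / 2) * dirichlet_kernel n x = sin ((INR n + / 2) * x).
Proof.
  induction n as [|n IHn]; cbn [dirichlet_kernel].
  - cbn [INR]. rewrite Rmult_1_r. f_equal. field.
  - rewrite Rmult_plus_distr_l, IHn.
    replace ((INR (S n) + / 2) * x) with (INR (S n) * x + x / 2) by (rewrite S_INR; field).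
    replace ((INR n + / 2) * x) with (INR (S n) * x - x / 2) by (rewrite S_INR; field).
    rewrite sin_plus, sin_minus. ring.
Qed.

(* The Dirichlet kernel is sin (N x) / sin (x / 2) with N = n + 1/2, and
   2 sinq N x = sin (N x) / (x / 2); the difference of the two denominators
   is the smooth bounded factor below. *)
Definition cosec_gap (x : R) : R := / sin (x / 2) - 2 / x.

Definition cosec_gap' (x : R) : R :=
  - (cos (x / 2) / 2) / (sin (x / 2) * sin (x / 2)) + 2 / (x * x).

Lemma cosec_gap_bounds x : 0 < x <= PI -> 0 <= cosec_gap x <= 1.
Proof.
  intros Hx. pose proof PI_4. set (y := x / 2).
  destruct (sin_cubic_bounds y) as [H1 H2]; [unfold y; lra|].
  pose proof (sin_half_ge x Hx) as Hs. fold y in Hs.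
  unfold cosec_gap. fold y. replace (2 / x) with (/ y) by (unfold y; field; lra).
  assert (Hy : 0 < y <= 2) by (unfold y; lra).
  replace (/ sin y - / y) with ((y - sin y) / (y * sin y)) by (field; lra).
  split.
  - apply Rmult_le_pos; [lra|]. left. apply Rinv_0_lt_compat. nra.
  - apply Rmult_le_reg_r with (y * sin y); [nra|].
    unfold Rdiv. rewrite Rmult_assoc, Rinv_l, Rmult_1_r, Rmult_1_l by nra.
    assert (y ^ 3 / 6 <= y * (y - y ^ 3 / 6)).
    { replace (y * (y - y ^ 3 / 6) - y ^ 3 / 6) with (y * y * (6 - y - y * y) / 6) by field.
      assert (0 <= y * y * (6 - y - y * y)) by (apply Rmult_le_pos; nra). lra. }
    assert (y * (y - y ^ 3 / 6) <= y * sin y) by (apply Rmult_le_compat_l; lra).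
    lra.
Qed.

Lemma Rabs_cosec_gap'_le x e : 0 < e <= x -> x <= PI -> Rabs (cosec_gap' x) <= 20 / (e * e).
Proof.
  intros He Hx. pose proof (sin_half_ge x ltac:(lra)) as Hs.
  unfold cosec_gap'.
  assert (Hc : Rabs (cos (x / 2) / 2) <= 1 / 2).
  { rewrite Rabs_div, (Rabs_right 2) by lra. pose proof (COS_bound (x / 2)).
    assert (Rabs (cos (x / 2)) <= 1) by (apply Rabs_le; lra). unfold Rdiv. lra. }
  assert (Hs2 : / (sin (x / 2) * sin (x / 2)) <= 36 / (e * e)).
  { replace (36 / (e * e)) with (/ ((e / 6) * (e / 6))) by (field; lra).
    apply Rinv_le_contravar; [nra|]. apply Rmult_le_compat; lra. }
  assert (Hx2 : 2 / (x * x) <= 2 / (e * e)).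
  { unfold Rdiv. apply Rmult_le_compat_l; [lra|]. apply Rinv_le_contravar; [nra|].
    apply Rmult_le_compat; lra. }
  assert (Hx2' : 0 <= 2 / (x * x)).
  { unfold Rdiv. apply Rmult_le_pos; [lra|]. left; apply Rinv_0_lt_compat; nra. }
  eapply Rle_trans; [apply Rabs_triang|].
  rewrite Rabs_div, Rabs_Ropp, (Rabs_right (sin _ * _)), (Rabs_right (2 / (x * x))) by nra.
  assert (Rabs (cos (x / 2) / 2) / (sin (x / 2) * sin (x / 2)) <= 1 / 2 * (36 / (e * e))).
  { unfold Rdiv at 1. apply Rmult_le_compat; try lra; [apply Rabs_pos|].
    left; apply Rinv_0_lt_compat; nra. }
  replace (20 / (e * e)) with (1 / 2 * (36 / (e * e)) + 2 / (e * e)) by (field; lra).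
  lra.
Qed.

Lemma is_derive_cosec_gap x : 0 < x <= PI -> is_derive cosec_gap x (cosec_gap' x).
Proof.
  intros Hx. pose proof (sin_half_ge x Hx).
  unfold cosec_gap, cosec_gap'. auto_derive; [repeat split; lra|].
  unfold Rdiv. field. split; lra.
Qed.

Lemma cosec_gap'_continuity_pt x : 0 < x <= PI -> continuity_pt cosec_gap' x.
Proof.
  intros Hx. pose proof (sin_half_ge x Hx). unfold cosec_gap'. reg; nra.
Qed.

Section SinIntegrationByParts.

Variables (h dh : R -> R) (N a b : R).
Hypotheses (HN : 0 < N) (Hab : a <= b).
Hypothesis Hder : forall x, a <= x <= b -> is_derive h x (dh x).
Hypothesis Hdc : forall x, a <= x <= b -> continuity_pt dh x.

Lemma RInt_sin_mul_by_parts :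
  RInt (fun x => sin (N * x) * h x) a b
  = (cos (N * a) * h a - cos (N * b) * h b) / N + RInt (fun x => cos (N * x) * dh x / N) a b.
Proof.
  set (Phi := fun x => - cos (N * x) / N * h x).
  set (dPhi := fun x => sin (N * x) * h x + - cos (N * x) / N * dh x).
  set (g := fun x => cos (N * x) * dh x / N).
  assert (HmM : forall u, Rmin a b <= u <= Rmax a b -> a <= u <= b)
    by (intros u; rewrite Rmin_left, Rmax_right by lra; auto).
  assert (Hhc : forall x, a <= x <= b -> continuity_pt h x).
  { intros x Hx. apply continuity_pt_filterlim, (@ex_derive_continuous R_AbsRing).
    eexists. apply Hder, Hx. }
  assert (Hgc : forall x, a <= x <= b -> continuity_pt g x).
  { intros x Hx. unfold g. apply continuity_pt_div; [|reg|lra].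
    apply continuity_pt_mult; [reg|auto]. }
  assert (HdPc : forall x, a <= x <= b -> continuity_pt dPhi x).
  { intros x Hx. unfold dPhi.
    apply continuity_pt_plus; apply continuity_pt_mult; auto; reg; lra. }
  assert (HPhi : RInt dPhi a b = Phi b - Phi a).
  { apply is_RInt_unique, (is_RInt_derive Phi dPhi); intros x Hx; apply HmM in Hx.
    - assert (H1 : is_derive (fun t => - cos (N * t) / N) x (sin (N * x))).
      { auto_derive; auto. field. lra. }
      pose proof (is_derive_mult _ _ x _ _ H1 (Hder x Hx) ltac:(intros; apply Rmult_comm))
        as H2.
      unfold Phi, dPhi. simpl in H2. unfold plus, mult in H2; simpl in H2. exact H2.
    - apply continuity_pt_filterlim, HdPc; auto. }
  rewrite (RInt_ext_R _ (fun x => dPhi x + g x)).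
  2:{ intros x _. unfold dPhi, g. field. lra. }
  rewrite RInt_Rplus, HPhi by (apply ex_RInt_continuity_pt; intros; auto).
  unfold Phi. f_equal. field. lra.
Qed.

Lemma Rabs_RInt_sin_mul_le B :
  (forall x, a <= x <= b -> Rabs (h x) <= 1) ->
  (forall x, a <= x <= b -> Rabs (dh x) <= B) ->
  Rabs (RInt (fun x => sin (N * x) * h x) a b) <= (2 + (b - a) * B) / N.
Proof.
  intros Hh Hdh. rewrite RInt_sin_mul_by_parts.
  assert (HPb : Rabs ((cos (N * a) * h a - cos (N * b) * h b) / N) <= 2 / N).
  { pose proof (proj1 (Rabs_le_between (h a) 1) (Hh a ltac:(lra))).
    pose proof (proj1 (Rabs_le_between (h b) 1) (Hh b ltac:(lra))).
    pose proof (COS_bound (N * a)). pose proof (COS_bound (N * b)).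
    unfold Rdiv. rewrite Rabs_mult, (Rabs_right (/ N))
      by (apply Rle_ge, Rlt_le, Rinv_0_lt_compat; lra).
    apply Rmult_le_compat_r; [apply Rlt_le, Rinv_0_lt_compat; lra|].
    apply Rabs_le. split; nra. }
  assert (Hgb : Rabs (RInt (fun x => cos (N * x) * dh x / N) a b) <= (b - a) * (B / N)).
  { apply abs_RInt_le_const; [lra| |].
    - apply ex_RInt_continuity_pt. intros x Hx.
      rewrite Rmin_left, Rmax_right in Hx by lra.
      apply continuity_pt_div; [apply continuity_pt_mult; [reg|auto]|reg|lra].
    - intros t Ht. rewrite Rabs_div, (Rabs_right N), Rabs_mult by lra.
      unfold Rdiv. apply Rmult_le_compat_r; [apply Rlt_le, Rinv_0_lt_compat; lra|].
      pose proof (Hdh t Ht). pose proof (COS_bound (N * t)).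
      assert (Rabs (cos (N * t)) <= 1) by (apply Rabs_le; lra).
      pose proof (Rabs_pos (cos (N * t))). pose proof (Rabs_pos (dh t)). nra. }
  eapply Rle_trans; [apply Rabs_triang|].
  replace ((2 + (b - a) * B) / N) with (2 / N + (b - a) * (B / N)) by (field; lra).
  lra.
Qed.

End SinIntegrationByParts.

Definition dirichlet_gap (n : nat) (x : R) : R :=
  dirichlet_kernel n x - 2 * sinq (INR n + / 2) x.

Lemma dirichlet_gap_continuity_pt n x : continuity_pt (dirichlet_gap n) x.
Proof.
  unfold dirichlet_gap. apply continuity_pt_minus; [apply dirichlet_kernel_continuity_pt|].
  apply continuity_pt_mult; [reg|apply sinq_continuity_pt].
Qed.

Lemma ex_RInt_dirichlet_gap n a b : ex_RInt (dirichlet_gap n) a b.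
Proof. apply ex_RInt_continuity_pt. intros; apply dirichlet_gap_continuity_pt. Qed.

Lemma RInt_dirichlet_gap n : RInt (dirichlet_gap n) 0 PI = PI - 2 * Si ((INR n + / 2) * PI).
Proof.
  unfold dirichlet_gap. rewrite RInt_Rminus, RInt_dirichlet_kernel, RInt_Rmult_l.
  - rewrite RInt_sinq_scale, Rmult_0_r. reflexivity.
  - apply ex_RInt_sinq.
  - apply ex_RInt_continuity_pt; intros; apply dirichlet_kernel_continuity_pt.
  - apply ex_RInt_Rmult_l, ex_RInt_sinq.
Qed.

Lemma dirichlet_gap_eq n x : 0 < x <= PI ->
  dirichlet_gap n x = sin ((INR n + / 2) * x) * cosec_gap x.
Proof.
  intros Hx. pose proof (sin_half_ge x Hx).
  unfold dirichlet_gap, cosec_gap, sinq. destruct (Req_EM_T x 0); [lra|].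
  rewrite <- sin_mul_dirichlet_kernel. field. lra.
Qed.

Lemma Rabs_dirichlet_gap_le n x : 0 <= x <= PI -> Rabs (dirichlet_gap n x) <= 1.
Proof.
  intros Hx. destruct (Req_dec x 0) as [->|Hx0].
  - unfold dirichlet_gap, sinq. destruct (Req_EM_T 0 0); [|lra].
    rewrite dirichlet_kernel_0.
    replace (1 + 2 * INR n - 2 * (INR n + / 2)) with 0 by field. rewrite Rabs_R0. lra.
  - rewrite dirichlet_gap_eq, Rabs_mult by lra.
    destruct (cosec_gap_bounds x) as [A B]; [lra|]. rewrite (Rabs_right (cosec_gap x)) by lra.
    pose proof (SIN_bound ((INR n + / 2) * x)).
    assert (Rabs (sin ((INR n + / 2) * x)) <= 1) by (apply Rabs_le; lra).
    pose proof (Rabs_pos (sin ((INR n + / 2) * x))). nra.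
Qed.

Lemma Rabs_PI_sub_Si_le n e : 0 < e <= PI ->
  Rabs (PI - 2 * Si ((INR n + / 2) * PI)) <= e + (2 + 20 * PI / (e * e)) / (INR n + / 2).
Proof.
  intros He. pose proof (pos_INR n).
  rewrite <- RInt_dirichlet_gap.
  rewrite <- (RInt_Chasles (dirichlet_gap n) 0 e PI) by apply ex_RInt_dirichlet_gap.
  unfold plus; simpl.
  eapply Rle_trans; [apply Rabs_triang|]. apply Rplus_le_compat.
  - replace e with ((e - 0) * 1) at 2 by ring.
    apply abs_RInt_le_const; [lra|apply ex_RInt_dirichlet_gap|].
    intros t Ht. apply Rabs_dirichlet_gap_le. lra.
  - rewrite (RInt_ext _ (fun x => sin ((INR n + / 2) * x) * cosec_gap x))
      by (intros x Hx; rewrite Rmin_left, Rmax_right in Hx by lra;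
          apply dirichlet_gap_eq; lra).
    eapply Rle_trans.
    + apply (Rabs_RInt_sin_mul_le cosec_gap cosec_gap' (INR n + / 2) e PI)
        with (B := 20 / (e * e)); try lra.
      * intros x Hx. apply is_derive_cosec_gap. lra.
      * intros x Hx. apply cosec_gap'_continuity_pt. lra.
      * intros x Hx. destruct (cosec_gap_bounds x) as [A B]; [lra|].
        rewrite Rabs_right; lra.
      * intros x Hx. apply Rabs_cosec_gap'_le; lra.
    + unfold Rdiv. apply Rmult_le_compat_r; [apply Rlt_le, Rinv_0_lt_compat; lra|].
      assert (0 < / (e * e)) by (apply Rinv_0_lt_compat; nra). nra.
Qed.

(* Dirichlet's integral, with an explicit rate: Si (N PI) is close to PI / 2 for
   large half-integers N, and the tail beyond x costs at most 2 / x. *)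
Lemma Rabs_Si_sub_PI2_le x : 0 < x -> Rabs (Si x - PI / 2) <= 2 / x.
Proof.
  intros Hx. apply Rle_plus_epsilon. intros eps Heps.
  pose proof PI_RGT_0 as HPI.
  set (e := Rmin eps PI).
  assert (He : 0 < e <= PI) by (unfold e; split; [apply Rmin_glb_lt; lra|apply Rmin_r]).
  assert (Hee : e <= eps) by apply Rmin_l.
  set (C := 2 + 20 * PI / (e * e)).
  assert (HC : 0 < C).
  { unfold C. assert (0 < 20 * PI / (e * e)) by (apply Rdiv_lt_0_compat; nra). lra. }
  destruct (INR_archimed 1 (x / PI + C / eps)) as [n Hn]; [lra|].
  rewrite Rmult_1_r in Hn.
  set (N := INR n + / 2).
  assert (HN0 : 0 < N) by (unfold N; pose proof (pos_INR n); lra).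
  assert (HxPI : 0 <= x / PI) by (apply Rmult_le_pos; [lra|apply Rlt_le, Rinv_0_lt_compat; lra]).
  assert (HCe : 0 < C / eps) by (apply Rdiv_lt_0_compat; lra).
  assert (HN1 : x <= N * PI).
  { assert (H : x / PI < N) by (unfold N; lra).
    apply Rmult_lt_compat_r with (r := PI) in H; [|lra]. unfold Rdiv in H.
    rewrite Rmult_assoc, Rinv_l, Rmult_1_r in H; lra. }
  assert (HN2 : C / N <= eps).
  { assert (H : C / eps < N) by (unfold N; lra).
    apply Rmult_lt_compat_r with (r := eps) in H; [|lra]. unfold Rdiv in H.
    rewrite Rmult_assoc, Rinv_l, Rmult_1_r in H by lra.
    unfold Rdiv. apply Rmult_le_reg_r with N; auto.
    rewrite Rmult_assoc, Rinv_l, Rmult_1_r by lra. lra. }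
  pose proof (Rabs_PI_sub_Si_le n e He) as HD. fold N C in HD.
  pose proof (Rabs_Si_sub_le x (N * PI) (conj Hx HN1)) as HT.
  apply Rabs_le_between in HD, HT. apply Rabs_le. lra.
Qed.

Lemma Rabs_Si_le x : Rabs (Si x) <= 4.
Proof.
  pose proof PI_4. pose proof PI_RGT_0.
  assert (Hpos : forall y, 0 <= y -> Rabs (Si y) <= 4).
  { intros y Hy. destruct (Rle_lt_dec y 1).
    - unfold Si. eapply Rle_trans.
      + apply (abs_RInt_le_const (sinq 1) 0 y 1); auto; [apply ex_RInt_sinq|].
        intros t _. pose proof (Rabs_sinq_le 1 t). rewrite Rabs_R1 in H1. auto.
      + lra.
    - pose proof (Rabs_Si_sub_PI2_le y ltac:(lra)).
      replace (Si y) with ((Si y - PI / 2) + PI / 2) by ring.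
      eapply Rle_trans; [apply Rabs_triang|]. rewrite (Rabs_right (PI / 2)) by lra.
      assert (/ y <= 1) by (rewrite <- Rinv_1; apply Rinv_le_contravar; lra).
      unfold Rdiv in *. lra. }
  destruct (Rle_lt_dec 0 x); auto.
  replace x with (- - x) by ring. rewrite Si_opp, Rabs_Ropp. apply Hpos. lra.
Qed.

(** * The kernel integral *)

Ltac cont2d := repeat first
  [ apply continuity_2d_pt_mult | apply continuity_2d_pt_plus
  | apply continuity_2d_pt_minus | apply continuity_2d_pt_opp
  | apply continuity_2d_pt_id1 | apply continuity_2d_pt_id2 | apply continuity_2d_pt_const
  | apply (continuity_1d_2d_pt_comp cos); [apply continuity_cos|]
  | apply (continuity_1d_2d_pt_comp sin); [apply continuity_sin|]
  | apply (continuity_1d_2d_pt_comp (sinq _)); [apply sinq_continuity_pt|] ].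

Lemma ex_RInt_sinq_mul_cos b0 t a b : ex_RInt (fun x => sinq b0 x * cos (t * x)) a b.
Proof.
  apply ex_RInt_continuity_pt. intros.
  apply continuity_pt_mult; [apply sinq_continuity_pt|reg].
Qed.

Lemma ex_RInt_sinq_mul_sin b0 t a b : ex_RInt (fun x => sinq b0 x * sin (t * x)) a b.
Proof.
  apply ex_RInt_continuity_pt. intros.
  apply continuity_pt_mult; [apply sinq_continuity_pt|reg].
Qed.

Definition cos_transform (b0 r t : R) : R :=
  RInt (fun b => sinq b0 b * cos (t * b)) (- r) r.

Definition Si_window (b0 r t : R) : R := Si ((b0 + t) * r) + Si ((b0 - t) * r).

Lemma cos_transform_eq b0 r t : cos_transform b0 r t = Si_window b0 r t.
Proof.
  unfold cos_transform.
  rewrite (RInt_ext_R _ (fun b => / 2 * sinq (b0 + t) b + / 2 * sinq (b0 - t) b))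
    by (intros; apply sinq_mul_cos).
  rewrite RInt_Rplus by (apply ex_RInt_Rmult_l, ex_RInt_sinq).
  rewrite !RInt_Rmult_l, !RInt_sinq_sym by apply ex_RInt_sinq.
  unfold Si_window. field.
Qed.

Lemma cos_transform_continuity_pt b0 r t : continuity_pt (cos_transform b0 r) t.
Proof.
  apply (continuity_pt_ext (Si_window b0 r)); [intros; symmetry; apply cos_transform_eq|].
  unfold Si_window.
  apply continuity_pt_plus;
    [apply (continuity_pt_comp (fun t => (b0 + t) * r) Si)
    |apply (continuity_pt_comp (fun t => (b0 - t) * r) Si)];
    try reg; apply Si_continuity_pt.
Qed.

Lemma RInt_sinq_mul_sin b0 r t : RInt (fun b => sinq b0 b * sin (t * b)) (- r) r = 0.
Proof.
  apply RInt_odd; [|apply ex_RInt_sinq_mul_sin].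
  intros x. rewrite sinq_opp. replace (t * - x) with (- (t * x)) by ring. rewrite sin_neg. ring.
Qed.

Lemma RInt_sinq_mul_cos_shift b0 r a b :
  RInt (fun y => sinq b0 y * cos (a * (b - y))) (- r) r = cos (a * b) * cos_transform b0 r a.
Proof.
  rewrite (RInt_ext_R _ (fun y => cos (a * b) * (sinq b0 y * cos (a * y))
                             + sin (a * b) * (sinq b0 y * sin (a * y)))).
  2:{ intros y _. replace (a * (b - y)) with (a * b - a * y) by ring. rewrite cos_minus. ring. }
  pose proof (ex_RInt_sinq_mul_cos b0 a (- r) r) as Hc.
  pose proof (ex_RInt_sinq_mul_sin b0 a (- r) r) as Hs.
  rewrite (RInt_Rplus _ _ _ _ (ex_RInt_Rmult_l _ _ _ _ Hc) (ex_RInt_Rmult_l _ _ _ _ Hs)).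
  rewrite (RInt_Rmult_l _ _ _ _ Hc), (RInt_Rmult_l _ _ _ _ Hs).
  rewrite RInt_sinq_mul_sin, Rmult_0_r, Rplus_0_r. reflexivity.
Qed.

Definition kernel_row (b0 r a b : R) : R :=
  RInt (fun y => sinq b0 b * sinq b0 y * sinq a (b - y)) (- r) r.

Definition kernel_integral (b0 r a : R) : R := RInt (kernel_row b0 r a) (- r) r.

Lemma ex_RInt_kernel_row_integrand b0 a b p q :
  ex_RInt (fun y => sinq b0 b * sinq b0 y * sinq a (b - y)) p q.
Proof.
  apply ex_RInt_continuity_pt. intros z _.
  apply continuity_pt_mult; [apply continuity_pt_mult; [reg|apply sinq_continuity_pt]|].
  apply (continuity_pt_comp (fun y => b - y) (sinq a)); [reg|apply sinq_continuity_pt].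
Qed.

Lemma kernel_row_continuity_pt b0 r a b : 0 <= r -> continuity_pt (kernel_row b0 r a) b.
Proof.
  intros Hr. apply continuity_pt_filterlim.
  apply (continuous_RInt_param (fun y b => sinq b0 b * sinq b0 y * sinq a (b - y))); [lra| |].
  - intros; cont2d.
  - intros; apply ex_RInt_kernel_row_integrand.
Qed.

Lemma ex_RInt_kernel_row b0 r a p q : 0 <= r -> ex_RInt (kernel_row b0 r a) p q.
Proof. intros Hr. apply ex_RInt_continuity_pt. intros; apply kernel_row_continuity_pt, Hr. Qed.

Lemma is_derive_kernel_row b0 r a b : 0 <= r ->
  is_derive (fun a => kernel_row b0 r a b) a (sinq b0 b * cos (a * b) * cos_transform b0 r a).
Proof.
  intros Hr. unfold kernel_row.
  set (f := fun u y => sinq b0 b * sinq b0 y * sinq u (b - y)).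
  set (df := fun u y => sinq b0 b * (sinq b0 y * cos (u * (b - y)))).
  assert (Hd : forall u y, is_derive (fun z => f z y) u (df u y)).
  { intros u y. unfold f, df. rewrite <- Rmult_assoc.
    apply (is_derive_scal (fun z => sinq z (b - y))), is_derive_sinq_param. }
  assert (HD : forall u y, Derive (fun z => f z y) u = df u y)
    by (intros; apply is_derive_unique, Hd).
  replace (sinq b0 b * cos (a * b) * cos_transform b0 r a)
    with (RInt (fun y => Derive (fun u => f u y) a) (- r) r).
  2:{ rewrite (RInt_ext_R _ (df a)) by (intros; apply HD). unfold df.
      rewrite RInt_Rmult_l, RInt_sinq_mul_cos_shift; [ring_R|].
      apply ex_RInt_continuity_pt. intros. apply continuity_pt_mult; [apply sinq_continuity_pt|reg]. }
  apply (is_derive_RInt_param f (- r) r a).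
  - apply filter_forall. intros x t _. eexists. apply Hd.
  - intros t _. apply (continuity_2d_pt_ext df); [intros; rewrite HD; auto|]. unfold df. cont2d.
  - apply filter_forall. intros y. apply ex_RInt_kernel_row_integrand.
Qed.

Lemma is_derive_kernel_integral b0 r a : 0 <= r ->
  is_derive (kernel_integral b0 r) a (cos_transform b0 r a ^ 2).
Proof.
  intros Hr. unfold kernel_integral.
  set (dG := fun u v => sinq b0 v * cos (u * v) * cos_transform b0 r u).
  assert (HD : forall u v, Derive (fun z => kernel_row b0 r z v) u = dG u v)
    by (intros; apply is_derive_unique, is_derive_kernel_row, Hr).
  replace (cos_transform b0 r a ^ 2)
    with (RInt (fun t => Derive (fun u => kernel_row b0 r u t) a) (- r) r).
  2:{ rewrite (RInt_ext_R _ (fun t => cos_transform b0 r a * (sinq b0 t * cos (a * t))))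
        by (intros; rewrite HD; unfold dG; ring).
      rewrite RInt_Rmult_l by apply ex_RInt_sinq_mul_cos. unfold cos_transform. ring_R. }
  apply (is_derive_RInt_param (kernel_row b0 r) (- r) r a).
  - apply filter_forall. intros x t _. eexists. apply is_derive_kernel_row, Hr.
  - intros t _. apply (continuity_2d_pt_ext dG); [intros; rewrite HD; auto|].
    unfold dG. apply continuity_2d_pt_mult; [cont2d|].
    apply (continuity_1d_2d_pt_comp (cos_transform b0 r) (fun u v => u));
      [apply cos_transform_continuity_pt|cont2d].
  - apply filter_forall. intros y. apply ex_RInt_kernel_row, Hr.
Qed.

Lemma kernel_integral_0 b0 r : kernel_integral b0 r 0 = 0.
Proof.
  unfold kernel_integral, kernel_row.
  rewrite (RInt_ext_R _ (fun _ => 0)), RInt_Rconst; [ring|].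
  intros x _. rewrite (RInt_ext_R _ (fun _ => 0)), RInt_Rconst; [ring|].
  intros y _. rewrite sinq_0_param. ring.
Qed.

Lemma kernel_integral_opp b0 r a : 0 <= r -> kernel_integral b0 r (- a) = - kernel_integral b0 r a.
Proof.
  intros Hr. unfold kernel_integral.
  rewrite (RInt_ext_R _ (fun b => - kernel_row b0 r a b)).
  - apply RInt_Ropp, ex_RInt_kernel_row, Hr.
  - intros b _. unfold kernel_row. rewrite <- RInt_Ropp by apply ex_RInt_kernel_row_integrand.
    apply RInt_ext_R. intros y _. rewrite sinq_opp_param. ring.
Qed.

Lemma kernel_integral_eq b0 r a : 0 <= r ->
  kernel_integral b0 r a = RInt (fun t => Si_window b0 r t ^ 2) 0 a.
Proof.
  intros Hr. symmetry. apply (@is_RInt_unique R_CompleteNormedModule).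
  assert (H : is_RInt (fun t => cos_transform b0 r t ^ 2) 0 a
                (minus (kernel_integral b0 r a) (kernel_integral b0 r 0))).
  { apply (is_RInt_derive (kernel_integral b0 r)); intros x _.
    - apply is_derive_kernel_integral, Hr.
    - apply continuity_pt_filterlim. reg. apply cos_transform_continuity_pt. }
  rewrite kernel_integral_0 in H. unfold minus, plus, opp in H. simpl in H.
  rewrite Ropp_0, Rplus_0_r in H.
  eapply is_RInt_ext; [|exact H]. intros x _. cbv beta. rewrite cos_transform_eq. ring_R.
Qed.

Lemma Rabs_Si_window_le b0 r t : Rabs (Si_window b0 r t) <= 8.
Proof.
  unfold Si_window. pose proof (Rabs_Si_le ((b0 + t) * r)). pose proof (Rabs_Si_le ((b0 - t) * r)).
  eapply Rle_trans; [apply Rabs_triang|lra].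
Qed.

Lemma Rabs_Si_sub_PI2_le_of x e : 0 < e -> e <= x -> Rabs (Si x - PI / 2) <= 2 / e.
Proof.
  intros He Hx. eapply Rle_trans; [apply Rabs_Si_sub_PI2_le; lra|].
  unfold Rdiv. apply Rmult_le_compat_l; [lra|]. apply Rinv_le_contravar; lra.
Qed.

Lemma Rabs_Si_window_sqr_sub_le b0 r t d : 0 < d <= b0 -> 0 < r -> 0 <= t <= b0 - d ->
  Rabs (Si_window b0 r t ^ 2 - PI ^ 2) <= 48 / (d * r).
Proof.
  intros Hd Hr Ht. pose proof PI_4. pose proof PI_RGT_0.
  assert (Hdr : 0 < d * r) by nra.
  pose proof (Rabs_Si_sub_PI2_le_of ((b0 + t) * r) (d * r) Hdr ltac:(nra)) as HA.
  pose proof (Rabs_Si_sub_PI2_le_of ((b0 - t) * r) (d * r) Hdr ltac:(nra)) as HB.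
  pose proof (Rabs_Si_window_le b0 r t) as HW.
  unfold Si_window in *.
  set (A := Si ((b0 + t) * r) - PI / 2) in *. set (B := Si ((b0 - t) * r) - PI / 2) in *.
  replace ((Si ((b0 + t) * r) + Si ((b0 - t) * r)) ^ 2 - PI ^ 2)
    with ((A + B) * (2 * PI + A + B)) by (unfold A, B; field).
  replace (48 / (d * r)) with (2 * (2 / (d * r)) * 12) by (field; lra).
  rewrite Rabs_mult. apply Rmult_le_compat; try apply Rabs_pos.
  - eapply Rle_trans; [apply Rabs_triang|lra].
  - apply Rabs_le_between in HW. apply Rabs_le. unfold A, B in *. lra.
Qed.

Lemma Rabs_Si_window_sqr_le_beyond b0 r t d : 0 < d -> 0 < b0 -> 0 < r -> b0 + d <= t ->
  Rabs (Si_window b0 r t ^ 2) <= 48 / (d * r).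
Proof.
  intros Hd Hb Hr Ht. assert (Hdr : 0 < d * r) by nra.
  pose proof (Rabs_Si_sub_PI2_le_of ((b0 + t) * r) (d * r) Hdr ltac:(nra)) as HA.
  pose proof (Rabs_Si_sub_PI2_le_of ((t - b0) * r) (d * r) Hdr ltac:(nra)) as HB.
  pose proof (Rabs_Si_window_le b0 r t) as HW.
  assert (Hw : Rabs (Si_window b0 r t) <= 2 * (2 / (d * r))).
  { unfold Si_window. replace ((b0 - t) * r) with (- ((t - b0) * r)) by ring. rewrite Si_opp.
    replace (Si ((b0 + t) * r) + - Si ((t - b0) * r))
      with ((Si ((b0 + t) * r) - PI / 2) - (Si ((t - b0) * r) - PI / 2)) by ring.
    eapply Rle_trans; [apply Rabs_triang|]. rewrite Rabs_Ropp. lra. }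
  rewrite <- RPow_abs. replace (48 / (d * r)) with (12 * (2 * (2 / (d * r)))) by (field; lra).
  simpl. rewrite Rmult_1_r. apply Rmult_le_compat; try apply Rabs_pos; lra.
Qed.

Lemma ex_RInt_Si_window_sqr b0 r a b : ex_RInt (fun t => Si_window b0 r t ^ 2) a b.
Proof.
  apply ex_RInt_continuity_pt. intros. apply (continuity_pt_ext (fun t => cos_transform b0 r t ^ 2)).
  { intros; rewrite cos_transform_eq; auto. }
  reg. apply cos_transform_continuity_pt.
Qed.

(* Split [0, a] at b0 -/+ d: the window is close to PI before, close to 0
   after, and bounded on the transition layer of width 2 d. *)
Lemma Rabs_kernel_integral_sub_le b0 a d r : 0 < d <= b0 / 2 -> 0 < r -> 0 <= a ->
  Rabs (kernel_integral b0 r a - PI ^ 2 * Rmin a b0) <= 48 / (d * r) * a + 160 * d.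
Proof.
  intros Hd Hr Ha. pose proof PI_4. pose proof PI_RGT_0.
  assert (Hdr : 0 < d * r) by nra.
  set (eta := 48 / (d * r)).
  assert (Heta : 0 < eta) by (apply Rdiv_lt_0_compat; lra).
  set (t1 := Rmin a (b0 - d)). set (t2 := Rmin a (b0 + d)).
  assert (Ht : 0 <= t1 <= t2 /\ t2 <= a /\ t1 <= b0 - d /\ t2 - t1 <= 2 * d
               /\ t1 <= Rmin a b0 <= t2 /\ (t2 < a -> t2 = b0 + d)).
  { unfold t1, t2, Rmin. repeat destruct Rle_dec; lra. }
  rewrite kernel_integral_eq by lra.
  rewrite <- (RInt_Chasles _ 0 t1 a), <- (RInt_Chasles _ t1 t2 a) by apply ex_RInt_Si_window_sqr.
  unfold plus; simpl.
  destruct (RInt_between (fun t => Si_window b0 r t ^ 2) 0 t1 (PI ^ 2 - eta) (PI ^ 2 + eta))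
    as [I1a I1b]; [lra|apply ex_RInt_Si_window_sqr| |].
  { intros t Ht'. apply Rabs_le_between'. apply Rabs_Si_window_sqr_sub_le; lra. }
  destruct (RInt_between (fun t => Si_window b0 r t ^ 2) t1 t2 (-64) 64)
    as [I2a I2b]; [lra|apply ex_RInt_Si_window_sqr| |].
  { intros t _. pose proof (Rabs_Si_window_le b0 r t) as HW. apply Rabs_le_between in HW.
    simpl. nra. }
  destruct (RInt_between (fun t => Si_window b0 r t ^ 2) t2 a (- eta) eta)
    as [I3a I3b]; [lra|apply ex_RInt_Si_window_sqr| |].
  { intros t Ht'. apply Rabs_le_between. apply (Rabs_Si_window_sqr_le_beyond _ _ _ d); lra. }
  assert (PI ^ 2 <= 16) by nra.
  assert (PI ^ 2 * t1 <= PI ^ 2 * Rmin a b0 <= PI ^ 2 * t1 + 32 * d) by nra.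
  assert (eta * t1 + eta * (a - t2) <= eta * a) by nra.
  simpl in *. apply Rabs_le. split; nra.
Qed.

Definition clamp (b0 x : R) : R := Rmax (- b0) (Rmin x b0).

Lemma is_lim_kernel_integral b0 a : 0 < b0 ->
  is_lim (fun r => kernel_integral b0 r a) p_infty (PI ^ 2 * clamp b0 a).
Proof.
  intros Hb.
  assert (Hpos : forall a, 0 <= a ->
            is_lim (fun r => kernel_integral b0 r a) p_infty (PI ^ 2 * Rmin a b0)).
  { clear a. intros a Ha. apply is_lim_spec. intros eps. pose proof (cond_pos eps).
    set (d := Rmin (b0 / 2) (eps / 320)).
    assert (Hd : 0 < d <= b0 / 2 /\ d <= eps / 320).
    { unfold d. split; [split|]; [apply Rmin_glb_lt; lra|apply Rmin_l|apply Rmin_r]. }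
    exists (96 * (a + 1) / (d * eps)). intros r Hr.
    assert (Hde : 0 < d * eps) by nra.
    assert (HM0 : 0 < 96 * (a + 1) / (d * eps)) by (apply Rdiv_lt_0_compat; lra).
    assert (Hra : 48 / (d * r) * a < eps / 2).
    { apply (Rmult_lt_compat_r (d * eps)) in Hr; [|lra].
      unfold Rdiv in *. rewrite Rmult_assoc, Rinv_l, Rmult_1_r in Hr by lra.
      assert (0 < / (d * r)) by (apply Rinv_0_lt_compat; nra).
      apply (Rmult_lt_reg_r (d * r)); [nra|].
      replace (48 * / (d * r) * a * (d * r)) with (48 * a) by (field; nra). nra. }
    eapply Rle_lt_trans; [apply (Rabs_kernel_integral_sub_le _ _ d); lra|]. lra. }
  destruct (Rle_lt_dec 0 a) as [Ha|Ha].
  - replace (clamp b0 a) with (Rmin a b0) by (unfold clamp, Rmax, Rmin; repeat destruct Rle_dec; lra).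
    apply Hpos, Ha.
  - replace (PI ^ 2 * clamp b0 a) with (- (PI ^ 2 * Rmin (- a) b0))
      by (unfold clamp, Rmax, Rmin; repeat destruct Rle_dec; lra).
    apply (is_lim_ext_loc (fun r => - kernel_integral b0 r (- a))).
    + exists 0. intros r Hr. rewrite kernel_integral_opp, Ropp_involutive by lra. reflexivity.
    + apply (is_lim_opp (fun r => kernel_integral b0 r (- a)) p_infty (PI ^ 2 * Rmin (- a) b0)).
      apply Hpos. lra.
Qed.

(** * Momentum densities *)

Lemma double_int_R2_of_is_lim (F : R -> R -> R) (l : R) :
  (forall x y, continuity_2d_pt F x y) -> (forall x y, continuity_2d_pt (fun u v => F v u) x y) ->
  is_lim (fun r => RInt (fun b => RInt (fun b' => F b b') (- r) r) (- r) r) p_infty l ->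
  double_int_R2 F l.
Proof.
  intros HF HF' Hl.
  exists (fun r => RInt (fun b => RInt (fun b' => F b b') (- r) r) (- r) r). split.
  - intros r Hr. exists (fun b => RInt (fun b' => F b b') (- r) r).
    assert (Hin : forall b, ex_RInt (fun b' => F b b') (- r) r).
    { intros b. apply ex_RInt_continuity_pt. intros z _. apply continuity_pt_of_2d_snd, HF. }
    assert (Hout : ex_RInt (fun b => RInt (fun b' => F b b') (- r) r) (- r) r).
    { apply ex_RInt_continuity_pt. intros z _. apply continuity_pt_filterlim.
      apply (continuous_RInt_param (fun t p => F p t)); [lra|intros; apply HF'|apply Hin]. }
    split.
    + intros b. exists (ex_RInt_Reals_0 _ _ _ (Hin b)). rewrite <- RInt_Reals. reflexivity.
    + exists (ex_RInt_Reals_0 _ _ _ Hout). rewrite <- RInt_Reals. reflexivity.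
  - intros eps Heps. apply is_lim_spec in Hl. cbv beta iota delta [is_lim'] in Hl.
    destruct (Hl (mkposreal eps Heps)) as [M HM].
    exists (M + 1). intros r Hr. apply HM. lra.
Qed.

Lemma double_int_R2_sinq_cos (F : R -> R -> R) b0 K w k : 0 < b0 ->
  (forall b b', F b b' = k * (sinq K (b - b') * cos (w * (b - b'))) * sinq b0 b * sinq b0 b') ->
  double_int_R2 F (k / 2 * PI ^ 2 * (clamp b0 (K + w) + clamp b0 (K - w))).
Proof.
  intros Hb HF. apply double_int_R2_of_is_lim.
  - intros x y. apply (continuity_2d_pt_ext
      (fun b b' => k * (sinq K (b - b') * cos (w * (b - b'))) * sinq b0 b * sinq b0 b'));
      [intros; rewrite HF; auto|cont2d].
  - intros x y. apply (continuity_2d_pt_ext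
      (fun b' b => k * (sinq K (b - b') * cos (w * (b - b'))) * sinq b0 b * sinq b0 b'));
      [intros; rewrite HF; auto|cont2d].
  - apply (is_lim_ext_loc (fun r => k / 2 * kernel_integral b0 r (K + w)
                                   + k / 2 * kernel_integral b0 r (K - w))).
    + exists 0. intros r Hr. unfold kernel_integral.
      pose proof (fun a => ex_RInt_kernel_row b0 r a (- r) r ltac:(lra)) as Hrow.
      rewrite <- (RInt_Rmult_l _ _ _ _ (Hrow (K + w))), <- (RInt_Rmult_l _ _ _ _ (Hrow (K - w))).
      rewrite <- (RInt_Rplus _ _ _ _ (ex_RInt_Rmult_l _ _ _ _ (Hrow (K + w)))
                                     (ex_RInt_Rmult_l _ _ _ _ (Hrow (K - w)))).
      apply RInt_ext_R. intros b _. unfold kernel_row.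
      pose proof (fun a => ex_RInt_kernel_row_integrand b0 a b (- r) r) as Hin.
      rewrite <- (RInt_Rmult_l _ _ _ _ (Hin (K + w))), <- (RInt_Rmult_l _ _ _ _ (Hin (K - w))).
      rewrite <- (RInt_Rplus _ _ _ _ (ex_RInt_Rmult_l _ _ _ _ (Hin (K + w)))
                                     (ex_RInt_Rmult_l _ _ _ _ (Hin (K - w)))).
      apply RInt_ext_R. intros y _. rewrite HF, (sinq_mul_cos K w). field.
    + replace (k / 2 * PI ^ 2 * (clamp b0 (K + w) + clamp b0 (K - w)))
        with (k / 2 * (PI ^ 2 * clamp b0 (K + w)) + k / 2 * (PI ^ 2 * clamp b0 (K - w)))
        by ring.
      apply is_lim_plus'; apply (is_lim_scal_l _ _ p_infty (PI ^ 2 * _));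
        apply is_lim_kernel_integral, Hb.
Qed.

Lemma double_int_R2_sinq_sin (F : R -> R -> R) b0 K w k :
  (forall b b', F b b' = k * (sinq K (b - b') * sin (w * (b - b'))) * sinq b0 b * sinq b0 b') ->
  double_int_R2 F 0.
Proof.
  intros HF.
  set (G := fun b b' => k * (sinq K (b - b') * sin (w * (b - b'))) * sinq b0 b * sinq b0 b').
  assert (HFG : forall b b', F b b' = G b b') by exact HF.
  apply double_int_R2_of_is_lim.
  - intros x y. apply (continuity_2d_pt_ext G); [intros; rewrite HFG; auto|unfold G; cont2d].
  - intros x y. apply (continuity_2d_pt_ext (fun b' b => G b b'));
      [intros; rewrite HFG; auto|unfold G; cont2d].
  - apply (is_lim_ext_loc (fun _ => 0)); [|apply is_lim_const].
    exists 0. intros r Hr.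
    assert (Hex : forall b, ex_RInt (fun b' => F b b') (- r) r).
    { intros b. apply ex_RInt_continuity_pt. intros z _.
      apply continuity_pt_of_2d_snd. apply (continuity_2d_pt_ext G);
        [intros; rewrite HFG; auto|unfold G; cont2d]. }
    (* The integrand is odd under (b, b') |-> (-b, -b'). *)
    symmetry. apply RInt_odd.
    + intros b. rewrite <- (RInt_comp_opp_sym (fun b' => F (- b) b')), <- RInt_Ropp by apply Hex.
      apply RInt_ext_R. intros y _. rewrite !HFG. unfold G.
      replace (- b - - y) with (- (b - y)) by ring.
      rewrite !sinq_opp. replace (w * - (b - y)) with (- (w * (b - y))) by ring.
      rewrite sin_neg. ring.
    + apply ex_RInt_continuity_pt. intros z _. apply continuity_pt_filterlim.
      apply (continuous_RInt_param (fun t p => F p t)); [lra| |apply Hex].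
      intros t _. apply (continuity_2d_pt_ext (fun b' b => G b b'));
        [intros; rewrite HFG; auto|unfold G; cont2d].
Qed.

Lemma mom_integrand_eq hbar sgn alpha g0 kappa0 b0 lambda s b b' : 0 < hbar ->
  let w := sgn * lambda / 2 - s / hbar in
  let k := / (2 * PI * hbar) * (Cc alpha g0 kappa0 b0 lambda / (b0 * PI)) in
  let K := Kc alpha g0 kappa0 b0 lambda in
  fst (mom_integrand hbar sgn alpha g0 kappa0 b0 lambda s b b') =
    k * (sinq K (b - b') * cos (w * (b - b'))) * sinq b0 b * sinq b0 b' /\
  snd (mom_integrand hbar sgn alpha g0 kappa0 b0 lambda s b b') =
    k * (sinq K (b - b') * sin (w * (b - b'))) * sinq b0 b * sinq b0 b'.
Proof.
  intros Hh w k K. unfold mom_integrand, rho, Cscal, Cmul, Cexpi, w, k, K. simpl.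
  replace ((sgn * lambda / 2 - s / hbar) * (b - b')) with
    (sgn * lambda / 2 * (b - b') + - s * (b - b') / hbar) by (field; lra).
  rewrite cos_plus, sin_plus. split; ring.
Qed.

Lemma mom_density_clamp hbar sgn alpha g0 kappa0 b0 lambda s : 0 < hbar -> 0 < b0 ->
  let w := sgn * lambda / 2 - s / hbar in
  let k := / (2 * PI * hbar) * (Cc alpha g0 kappa0 b0 lambda / (b0 * PI)) in
  let K := Kc alpha g0 kappa0 b0 lambda in
  mom_density hbar sgn alpha g0 kappa0 b0 lambda s
    (k / 2 * PI ^ 2 * (clamp b0 (K + w) + clamp b0 (K - w))).
Proof.
  intros Hh Hb w k K. split.
  - apply double_int_R2_sinq_cos; auto. intros; apply mom_integrand_eq, Hh.
  - eapply double_int_R2_sinq_sin. intros; apply mom_integrand_eq, Hh.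
Qed.

Lemma Kc_eq alpha g0 kappa0 b0 lambda : 0 < alpha -> 0 < g0 -> 0 < kappa0 -> 0 < b0 -> 2 * b0 < lambda ->
  Kc alpha g0 kappa0 b0 lambda = (lambda - 2 * b0) / 2.
Proof. intros. unfold Kc, dtau. field. repeat split; lra. Qed.

Lemma Cc_eq alpha g0 kappa0 b0 lambda : 0 < alpha -> 0 < g0 -> 0 < kappa0 -> 0 < b0 -> 2 * b0 < lambda ->
  Cc alpha g0 kappa0 b0 lambda = 2 / (lambda - 2 * b0).
Proof. intros. unfold Cc, dtau. field. repeat split; lra. Qed.

(** * The trapezoidal profile *)

Lemma clamp_id b0 x : - b0 <= x <= b0 -> clamp b0 x = x.
Proof. intros. unfold clamp, Rmax, Rmin. repeat destruct Rle_dec; lra. Qed.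

Lemma clamp_max b0 x : 0 <= b0 -> b0 <= x -> clamp b0 x = b0.
Proof. intros. unfold clamp, Rmax, Rmin. repeat destruct Rle_dec; lra. Qed.

Lemma clamp_min b0 x : 0 <= b0 -> x <= - b0 -> clamp b0 x = - b0.
Proof. intros. unfold clamp, Rmax, Rmin. repeat destruct Rle_dec; lra. Qed.

Definition pointer_density (hbar b0 lambda s : R) : R :=
  (clamp b0 (lambda - b0 - s / hbar) + clamp b0 (s / hbar - b0))
  / (2 * b0 * hbar * (lambda - 2 * b0)).

Lemma mom_density_pointer_density hbar sgn alpha g0 kappa0 b0 lambda s :
  0 < hbar -> 0 < alpha -> 0 < g0 -> 0 < kappa0 -> 0 < b0 -> 2 * b0 < lambda ->
  sgn = 1 \/ sgn = -1 ->
  mom_density hbar sgn alpha g0 kappa0 b0 lambda s (pointer_density hbar b0 lambda (sgn * s)).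
Proof.
  intros Hh Ha Hg Hk Hb Hl Hsgn. pose proof PI_RGT_0 as HPI.
  pose proof (mom_density_clamp hbar sgn alpha g0 kappa0 b0 lambda s Hh Hb) as H. cbv zeta in H.
  rewrite Kc_eq, Cc_eq in H by auto.
  replace (/ (2 * PI * hbar) * (2 / (lambda - 2 * b0) / (b0 * PI)) / 2 * PI ^ 2)
    with (/ (2 * b0 * hbar * (lambda - 2 * b0))) in H by (field; repeat split; lra).
  unfold pointer_density, Rdiv at 1. rewrite Rmult_comm.
  destruct Hsgn as [-> | ->].
  - replace ((lambda - 2 * b0) / 2 + (1 * lambda / 2 - s / hbar)) with (lambda - b0 - 1 * s / hbar)
      in H by (field; lra).
    replace ((lambda - 2 * b0) / 2 - (1 * lambda / 2 - s / hbar)) with (1 * s / hbar - b0)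
      in H by (field; lra).
    exact H.
  - replace ((lambda - 2 * b0) / 2 + (-1 * lambda / 2 - s / hbar)) with (-1 * s / hbar - b0)
      in H by (field; lra).
    replace ((lambda - 2 * b0) / 2 - (-1 * lambda / 2 - s / hbar)) with (lambda - b0 - -1 * s / hbar)
      in H by (field; lra).
    rewrite Rplus_comm. exact H.
Qed.

Section PointerDensity.

Variables hbar b0 lambda : R.
Hypotheses (Hh : 0 < hbar) (Hb : 0 < b0) (Hl : 2 * b0 < lambda).

Let d := pointer_density hbar b0 lambda.

Lemma pointer_density_out s : s < 0 \/ lambda * hbar < s -> d s = 0.
Proof.
  intros Hs. unfold d, pointer_density.
  destruct Hs as [Hs|Hs].
  - assert (s / hbar < 0) by (unfold Rdiv; apply Rmult_neg_pos; [lra|apply Rinv_0_lt_compat; lra]).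
    rewrite (clamp_max b0 (lambda - b0 - _)), (clamp_min b0 (_ - b0)) by lra.
    unfold Rdiv. ring.
  - assert (lambda < s / hbar) by (apply Rlt_div_r; lra).
    rewrite (clamp_min b0 (lambda - b0 - _)), (clamp_max b0 (_ - b0)) by lra.
    unfold Rdiv. ring.
Qed.

Lemma pointer_density_rise s :
  0 <= s -> s <= 2 * b0 * hbar -> s <= (lambda - 2 * b0) * hbar ->
  d s = s / (2 * b0 * hbar ^ 2 * (lambda - 2 * b0)).
Proof.
  intros H0 H1 H2. apply (Rle_div_l _ _ _ Hh) in H1, H2.
  assert (0 <= s / hbar) by (unfold Rdiv; apply Rmult_le_pos; [lra|apply Rlt_le, Rinv_0_lt_compat; lra]).
  unfold d, pointer_density.
  rewrite (clamp_max b0 (lambda - b0 - _)), (clamp_id b0 (_ - b0)) by lra.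
  field. repeat split; lra.
Qed.

Lemma pointer_density_fall s :
  2 * b0 * hbar <= s -> (lambda - 2 * b0) * hbar <= s -> s <= lambda * hbar ->
  d s = (lambda - s / hbar) / (2 * b0 * hbar * (lambda - 2 * b0)).
Proof.
  intros H0 H1 H2. apply (Rle_div_r _ _ _ Hh) in H0, H1. apply (Rle_div_l _ _ _ Hh) in H2.
  unfold d, pointer_density.
  rewrite (clamp_id b0 (lambda - b0 - _)), (clamp_max b0 (_ - b0)) by lra.
  field. repeat split; lra.
Qed.

Lemma pointer_density_wide_plateau s :
  2 * b0 * hbar <= s <= (lambda - 2 * b0) * hbar -> d s = 1 / ((lambda - 2 * b0) * hbar).
Proof.
  intros [H0 H1]. apply (Rle_div_r _ _ _ Hh) in H0. apply (Rle_div_l _ _ _ Hh) in H1.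
  unfold d, pointer_density.
  rewrite (clamp_max b0 (lambda - b0 - _)), (clamp_max b0 (_ - b0)) by lra.
  field. repeat split; lra.
Qed.

Lemma pointer_density_narrow_plateau s :
  (lambda - 2 * b0) * hbar <= s <= 2 * b0 * hbar -> d s = 1 / (2 * b0 * hbar).
Proof.
  intros [H0 H1]. apply (Rle_div_r _ _ _ Hh) in H0. apply (Rle_div_l _ _ _ Hh) in H1.
  unfold d, pointer_density.
  rewrite (clamp_id b0 (lambda - b0 - _)), (clamp_id b0 (_ - b0)) by lra.
  field. repeat split; lra.
Qed.

End PointerDensity.

Theorem mainTheorem5 (hbar alpha g0 kappa0 b0 lambda : R)
  (Hh : 0 < hbar) (Ha : 0 < alpha) (Hg : 0 < g0) (Hk : 0 < kappa0)
  (Hb : 0 < b0) (Hl : 2 * b0 < lambda) :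
  exists d : R -> R,
    (forall s, mom_density hbar 1 alpha g0 kappa0 b0 lambda s (d s)) /\
    (forall s, mom_density hbar (-1) alpha g0 kappa0 b0 lambda s (d (- s))) /\
    (forall s, (s < 0 \/ lambda * hbar < s) -> d s = 0) /\
    (4 * b0 < lambda ->
       (forall s, 0 <= s <= 2 * b0 * hbar ->
          d s = s / (2 * b0 * hbar ^ 2 * (lambda - 2 * b0))) /\
       (forall s, 2 * b0 * hbar <= s <= (lambda - 2 * b0) * hbar ->
          d s = 1 / ((lambda - 2 * b0) * hbar)) /\
       (forall s, (lambda - 2 * b0) * hbar <= s <= lambda * hbar ->
          d s = (lambda - s / hbar) / (2 * b0 * hbar * (lambda - 2 * b0)))) /\
    (lambda < 4 * b0 ->
       (forall s, 0 <= s <= (lambda - 2 * b0) * hbar ->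
          d s = s / (2 * b0 * hbar ^ 2 * (lambda - 2 * b0))) /\
       (forall s, (lambda - 2 * b0) * hbar <= s <= 2 * b0 * hbar ->
          d s = 1 / (2 * b0 * hbar)) /\
       (forall s, 2 * b0 * hbar <= s <= lambda * hbar ->
          d s = (lambda - s / hbar) / (2 * b0 * hbar * (lambda - 2 * b0)))) /\
    (lambda = 4 * b0 ->
       (forall s, 0 <= s <= lambda * hbar / 2 ->
          d s = 4 * s / (lambda ^ 2 * hbar ^ 2)) /\
       (forall s, lambda * hbar / 2 <= s <= lambda * hbar ->
          d s = 4 * (lambda - s / hbar) / (lambda ^ 2 * hbar))).
Proof.
  exists (pointer_density hbar b0 lambda).
  split; [|split; [|split; [|split; [|split]]]].
  - intros s. rewrite <- (Rmult_1_l s) at 2.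
    apply mom_density_pointer_density; auto.
  - intros s. replace (- s) with (-1 * s) by ring.
    apply mom_density_pointer_density; auto.
  - apply pointer_density_out; auto.
  - intros H4. split; [|split]; intros s Hs.
    + apply pointer_density_rise; nra.
    + apply pointer_density_wide_plateau; auto.
    + apply pointer_density_fall; nra.
  - intros H4. split; [|split]; intros s Hs.
    + apply pointer_density_rise; nra.
    + apply pointer_density_narrow_plateau; auto.
    + apply pointer_density_fall; nra.
  - intros ->. split; intros s Hs.
    + rewrite pointer_density_rise by nra. field. split; lra.
    + rewrite pointer_density_fall by nra. field. split; lra.
Qed.
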